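(* Let $(S,V)$ be a complete semiring-semimodule pair, let $S'\subseteq S$ contain $0$ and $1$, let $n\ge1$, let $\Gamma$ be an alphabet, and let $M\in (S'^{n\times n})^{\Gamma^*\times\Gamma^*}$ be a pushdown transition matrix. Then for all $0\le l\le n$, the pair of families $\big(((M^* )_{p,\epsilon})_{p\in\Gamma},((M^{\omega,l})_p)_{p\in\Gamma}\big)$ is a solution of the algebraic system $$y_p=\sum_{\pi\in\Gamma^*}M_{p,\pi}\,y_\pi,\qquad p\in\Gamma,$$ over the quemiring $S^{n\times n}\times V^n$; that is, setting $x_p=(M^* )_{p,\epsilon}$ and $z_p=(M^{\omega,l})_p$, for all $p\in\Gamma$: $$x_p=\sum_{\pi\in\Gamma^*}M_{p,\pi}x_\pi\quad\text{and}\quad z_p=\sum_{\pi=p_1\dots p_k\in\Gamma^+}M_{p,\pi}\sum_{1\le j\le k}x_{p_1}\cdots x_{p_{j-1}}z_{p_j},$$ where $x_{p_1\dots p_k}=x_{p_1}\cdots x_{p_k}$ and $x_\epsilon$ is the $n\times n$ identity matrix.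
   Context: A complete semiring-semimodule pair $(S,V)$ (in the sense of Ésik and Kuich, ''Modern Automata Theory'') consists of a complete starsemiring $S$ (arbitrary sums with infinite associativity/commutativity/distributivity laws, star $s^*=\sum_{j\ge0}s^j$) and a complete $S$-semimodule $V$, with infinite products $\prod_{j\ge1}s_j\in V$ of sequences in $S$ satisfying the axioms of that framework; then $(S^{n\times n},V^n)$ is again such a pair. The quemiring $S^{n\times n}\times V^n$ has componentwise sum and product $(s,u)(s',u')=(ss',u+su')$; in the system, $y_p=(x_p,z_p)$ and $y_{p_1\dots p_k}=y_{p_1}\cdots y_{p_k}$ (quemiring product), $y_\epsilon=(E,0)$, and a matrix $A\in S^{n\times n}$ acts by $A(s,u)=(As,Au)$; the two displayed equations are exactly the componentwise form of the system. $M\in (S'^{n\times n})^{\Gamma^*\times\Gamma^*}$ is a $\Gamma^*\times\Gamma^*$ matrix with $n\times n$ blocks over $S'$; it is a pushdown transition matrix if (i) for each $p\in\Gamma$ only finitely many blocks $M_{p,\pi}$ are nonzero, and (ii) $M_{\pi_1,\pi_2}=M_{p,\pi}$ if $\pi_1=p\pi'$, $\pi_2=\pi\pi'$ for some $p\in\Gamma$, $\pi,\pi'\in\Gamma^*$, and $0$ otherwise. $M^*=\sum_{m\ge0}M^m$ with blocks $(M^* )_{\pi,\pi'}$. Let $P_l=\{(j_1,j_2,\dots)\in\{1,\dots,n\}^\omega\mid j_t\le l\text{ for infinitely many }t\}$; $M^{\omega,l}\in (V^n)^{\Gamma^*}$ is given by $((M^{\omega,l})_\pi)_i=\sum_{\pi_1,\pi_2,\ldots\in\Gamma^*}\sum_{(j_1,j_2,\ldots)\in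 P_l}(M_{\pi,\pi_1})_{i,j_1}(M_{\pi_1,\pi_2})_{j_1,j_2}\cdots$. *)

From HB Require Import structures.
From mathcomp Require Import all_boot all_order all_algebra.
Set Implicit Arguments. Unset Strict Implicit. Unset Printing Implicit Defensive.
Import GRing.Theory.
Local Open Scope ring_scope.

Definition sum_op (M : Type) := forall I : Type, (I -> M) -> M.

(* Axioms of a complete (commutative) monoid: empty sum, one-element sums,
   two-element sums, and generalized associativity/commutativity for every
   partition of the index set (given by the fibres of a map f : I -> J). *)
Definition complete_monoid (M : nmodType) (sum : sum_op M) : Prop :=
  [/\ forall (I : Type) (a : I -> M), (I -> False) -> sum I a = 0,
      forall (I : Type) (a : I -> M) (i0 : I), (forall i, i = i0) -> sum I a = a i0,
      forall (I : Type) (a : I -> M) (i0 i1 : I),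
        i0 <> i1 -> (forall i, i = i0 \/ i = i1) -> sum I a = a i0 + a i1
    & forall (I J : Type) (f : I -> J) (a : I -> M),
        sum I a = sum J (fun j => sum {i : I | f i = j} (fun i => a (sval i)))].

Definition complete_semiring (S : pzSemiRingType) (csum : sum_op S) : Prop :=
  [/\ complete_monoid csum,
      forall (I : Type) (a : I -> S) (s : S), csum I (fun i => s * a i) = s * csum I a
    & forall (I : Type) (a : I -> S) (s : S), csum I (fun i => a i * s) = csum I a * s].

Definition complete_semimodule (S : pzSemiRingType) (V : lSemiModType S)
  (csum : sum_op S) (vsum : sum_op V) : Prop :=
  [/\ complete_monoid vsum,
      forall (I : Type) (v : I -> V) (s : S), vsum I (fun i => s *: v i) = s *: vsum I v
    & forall (I : Type) (a : I -> S) (v : V), vsum I (fun i => a i *: v) = csum I a *: v].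

(* Complete semiring-semimodule pair: infinite products prod_{j>=1} s_j are
   modelled by iprod s with s : nat -> S (index shifted to start at 0). *)
Definition complete_pair (S : pzSemiRingType) (V : lSemiModType S)
  (csum : sum_op S) (vsum : sum_op V) (iprod : (nat -> S) -> V) : Prop :=
  [/\ complete_semiring csum,
      complete_semimodule csum vsum,
      forall s : nat -> S, iprod s = s 0%N *: iprod (fun j => s j.+1),
      forall (s : nat -> S) (m : nat -> nat),
        m 0%N = 0%N -> (forall j, (m j < m j.+1)%N) ->
        iprod s = iprod (fun j => \prod_(m j <= k < m j.+1) s k)
    &
      forall (I : nat -> Type) (a : forall j, I j -> S),
        iprod (fun j => csum (I j) (a j)) =
        vsum (forall j, I j) (fun c => iprod (fun j => a j (c j)))].

Section PushdownMatrices.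
Variables (S : pzSemiRingType) (V : lSemiModType S).
Variables (csum : sum_op S) (vsum : sum_op V).
Variables (n : nat) (Gamma : finType).

Definition blockmx := seq Gamma -> seq Gamma -> 'M[S]_n.

Definition msum (I : Type) (F : I -> 'M[S]_n) : 'M[S]_n :=
  \matrix_(i, j) @csum I (fun x => F x i j).
Definition vecsum (I : Type) (F : I -> 'cV[V]_n) : 'cV[V]_n :=
  \col_i @vsum I (fun x => F x i 0).

Definition mxact (A : 'M[S]_n) (u : 'cV[V]_n) : 'cV[V]_n :=
  \col_i \sum_(k < n) A i k *: u k 0.

Definition pushdown (M : blockmx) : Prop :=
  (forall p : Gamma, exists s : seq (seq Gamma),
      forall pi, M [:: p] pi <> 0 -> pi \in s) /\
  (forall pi1 pi2,
     (forall (p : Gamma) (pi pi' : seq Gamma),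
        pi1 = p :: pi' -> pi2 = pi ++ pi' -> M pi1 pi2 = M [:: p] pi) /\
     (~ (exists (p : Gamma) (pi pi' : seq Gamma), pi1 = p :: pi' /\ pi2 = pi ++ pi') ->
        M pi1 pi2 = 0)).

Fixpoint Mpow (M : blockmx) (m : nat) : blockmx :=
  match m with
  | 0%N => fun pi1 pi2 => if pi1 == pi2 then 1%:M else 0
  | m'.+1 => fun pi1 pi2 => msum (fun pi => Mpow M m' pi1 pi *m M pi pi2)
  end.

Definition Mstar (M : blockmx) : blockmx := fun pi1 pi2 => msum (fun m => Mpow M m pi1 pi2).

(* P_l (0-based indices: j_t < l corresponds to j_t <= l) *)
Definition Pl (l : nat) (c : nat -> seq Gamma * 'I_n) : Prop :=
  forall N : nat, exists t : nat, (N <= t)%N /\ ((c t).2 < l)%N.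

(* M^{omega,l}: c t = (pi_{t+1}, j_{t+1}) *)
Definition Momega (iprod : (nat -> S) -> V) (l : nat) (M : blockmx) (pi : seq Gamma)
  : 'cV[V]_n :=
  \col_i @vsum {c : nat -> seq Gamma * 'I_n | Pl l c}
    (fun c =>
       let st k := if k is k'.+1 then (sval c k').1 else pi in
       let ix k := if k is k'.+1 then (sval c k').2 else i in
       iprod (fun t => M (st t) (st t.+1) (ix t) (ix t.+1))).

Definition xprod (x : Gamma -> 'M[S]_n) (w : seq Gamma) : 'M[S]_n :=
  foldr (fun p A => x p *m A) 1%:M w.

End PushdownMatrices.

From HB Require Import structures.
From mathcomp Require Import all_boot all_order all_algebra.
From mathcomp Require Import boolp.
Import GRing.Theory.
Local Open Scope ring_scope.

(* Both equations are first-step analyses.  Row [q :: rho] of a pushdown matrix acts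
   on the top symbol only, so a path from [rho ++ pi] down to the empty stack first empties
   [rho]; summing over the time at which this happens turns the powers of [M] into a Cauchy
   product and gives (M^* )_{rho pi, eps} = (M^* )_{rho, eps} (M^* )_{pi, eps}, i.e.
   (M^* )_{pi, eps} = x_pi.  The first equation is then M^* = 1 + M M^* read in row [p].
   Likewise an infinite run from [rho ++ pi] either never reaches the stack [pi], and then
   [pi] stays at the bottom and the run is a run from [rho] (or has weight 0), or it reaches
   [pi] for the first time after [a] steps and contributes (M^a)_{rho, eps} M^{omega,l}_pi.
   Hence M^{omega,l}_{rho pi} = M^{omega,l}_rho + (M^* )_{rho, eps} M^{omega,l}_pi, which
   unfolds to M^{omega,l}_{p_1...p_k} = sum_j x_{p_1...p_{j-1}} z_{p_j}; splitting off the
   first step of a run gives the second equation. *)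

(* Complete monoids in which every family of zeros sums to zero.  In complete
   semirings and semimodules this follows from distributivity, but it is not a
   consequence of [complete_monoid] alone. *)
Definition complete_monoid0 {M : nmodType} (sum : sum_op M) : Prop :=
  complete_monoid sum /\ forall I, sum I (fun _ => 0) = 0.

Section CompleteMonoid.
Context {M : nmodType} {sum : sum_op M}.

Lemma eq_sum {I : Type} {a b : I -> M} : a =1 b -> sum I a = sum I b.
Proof. by move=> /funext ->. Qed.

Hypothesis sumP : complete_monoid0 sum.

Lemma sum_const0 (I : Type) : sum I (fun _ => 0) = 0.
Proof. exact: sumP.2. Qed.

Lemma sum_empty {I : Type} (a : I -> M) : (I -> False) -> sum I a = 0.
Proof. by case: sumP.1 => h _ _ _; apply: h. Qed.

Lemma sum_single {I : Type} (a : I -> M) i0 : (forall i, i = i0) -> sum I a = a i0.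
Proof. by case: sumP.1 => _ h _ _; apply: h. Qed.

Lemma sum_doubleton {I : Type} (a : I -> M) i0 i1 :
  i0 <> i1 -> (forall i, i = i0 \/ i = i1) -> sum I a = a i0 + a i1.
Proof. by case: sumP.1 => _ _ h _; apply: h. Qed.

Lemma sum_partition {I J : Type} (f : I -> J) (a : I -> M) :
  sum I a = sum J (fun j => sum {i | f i = j} (fun i => a (sval i))).
Proof. by case: sumP.1 => _ _ _ h; apply: h. Qed.

Lemma sum_reindex {I J : Type} (g : J -> I) (h : I -> J) (a : I -> M) :
  cancel g h -> cancel h g -> sum I a = sum J (fun j => a (g j)).
Proof.
move=> gK hK; rewrite (sum_partition h); apply: eq_sum => j.
rewrite (@sum_single _ _ (exist _ (g j) (gK j))) // => -[i e].
by apply: eq_exist; rewrite -e hK.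
Qed.

Lemma sum_bool (a : bool -> M) : sum bool a = a true + a false.
Proof. by apply: sum_doubleton => // -[]; auto. Qed.

Lemma sum_restrict {I : Type} (P : pred I) (a : I -> M) :
  (forall i, ~~ P i -> a i = 0) -> sum I a = sum {i | P i} (fun i => a (sval i)).
Proof.
move=> aP; rewrite (sum_partition P) sum_bool.
rewrite [X in _ + X](_ : _ = 0) ?addr0 //.
by rewrite -(sum_const0 {i | P i = false}); apply: eq_sum => -[i /= /negbT /aP].
Qed.

Lemma sum_inj {I J : Type} (phi : J -> I) (a : I -> M) :
  injective phi -> (forall i, (forall j, phi j <> i) -> a i = 0) ->
  sum I a = sum J (fun j => a (phi j)).
Proof.
move=> phi_inj aP; pose P i := `[< exists j, phi j = i >].
rewrite (sum_restrict P); last by move=> i /asboolPn Pi; apply: aP => j e; apply: Pi; exists j.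
pose h (i : {i | P i}) := sval (cid (asboolW (svalP i))).
have hP i : phi (h i) = sval i by rewrite /h; case: cid.
apply: (@sum_reindex _ _ (fun j => exist _ (phi j) (asboolT (ex_intro _ j erefl))) h).
  by move=> j; apply: phi_inj; rewrite hP.
by move=> [i Pi]; apply: eq_exist; rewrite hP.
Qed.

Lemma sum_unique {I : Type} i0 (a : I -> M) : (forall i, i <> i0 -> a i = 0) -> sum I a = a i0.
Proof.
move=> aP; rewrite (@sum_inj I unit (fun _ => i0)) ?(@sum_single _ _ tt) //.
- by case.
- by do 2!case.
- by move=> i i0'; apply: aP => e; apply: (i0' tt).
Qed.

Lemma sum_prod {I J : Type} (a : I * J -> M) :
  sum (I * J)%type a = sum I (fun i => sum J (fun j => a (i, j))).
Proof.
rewrite (sum_partition fst); apply: eq_sum => i.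
rewrite (@sum_reindex _ _ (fun j => exist (fun x : I * J => x.1 = i) (i, j) erefl)
   (fun x => (sval x).2)) // => -[[i' j] /= e].
by apply: eq_exist; rewrite e.
Qed.

Lemma exchange_sum {I J : Type} (a : I -> J -> M) :
  sum I (fun i => sum J (a i)) = sum J (fun j => sum I (fun i => a i j)).
Proof.
rewrite -(sum_prod (fun x => a x.1 x.2)) -(sum_prod (fun x => a x.2 x.1)).
by rewrite (@sum_reindex _ _ (fun x : J * I => (x.2, x.1)) (fun x => (x.2, x.1))) // => -[].
Qed.

Lemma sumD {I : Type} (a b : I -> M) : sum I (fun i => a i + b i) = sum I a + sum I b.
Proof.
transitivity (sum I (fun i => sum bool (fun c => if c then a i else b i))).
  by apply: eq_sum => i; rewrite sum_bool.
by rewrite exchange_sum sum_bool.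
Qed.

Lemma sum_bigr {I : Type} m (F : I -> 'I_m -> M) :
  sum I (fun i => \sum_(k < m) F i k) = \sum_(k < m) sum I (fun i => F i k).
Proof.
elim: m F => [|m IH] F.
  by rewrite big_ord0 -[RHS](sum_const0 I); apply: eq_sum => i; rewrite big_ord0.
rewrite big_ord_recr /= -IH -sumD; apply: eq_sum => i; by rewrite big_ord_recr.
Qed.

Lemma sum_option {T : Type} (a : option T -> M) :
  sum (option T) a = a None + sum T (fun t => a (Some t)).
Proof.
have aE o : a o = (if o is None then a o else 0) + (if o is Some _ then a o else 0).
  by case: o => [t|]; rewrite ?add0r ?addr0.
rewrite (eq_sum aE) sumD (sum_unique None) ?(sum_inj Some) //.
- exact: Some_inj.
- by case=> // t /(_ t).
- by case.
Qed.

Lemma sum_natS (a : nat -> M) : sum nat a = a 0%N + sum nat (fun m => a m.+1).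
Proof.
by rewrite (@sum_reindex _ _ (oapp S 0%N) (fun m => if m is k.+1 then Some k else None))
  ?sum_option // => -[].
Qed.

Lemma sum_ord m (a : 'I_m -> M) : sum 'I_m a = \sum_(k < m) a k.
Proof.
elim: m a => [|m IH] a; first by rewrite big_ord0 sum_empty // => -[].
rewrite (@sum_reindex _ _ (oapp (lift ord0) ord0) (unlift ord0)).
- by rewrite sum_option big_ord_recl IH.
- by case=> [k|]; [exact: liftK | exact: unlift_none].
- by move=> i; case: unliftP => [j|] ->.
Qed.

Lemma sum_nat_cauchy (a : nat -> nat -> M) :
  sum nat (fun m => \sum_(k < m.+1) a k (m - k)%N) = sum nat (fun i => sum nat (a i)).
Proof.
rewrite -(sum_prod (fun x => a x.1 x.2)) (sum_partition (fun x : nat * nat => x.1 + x.2)%N).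
apply: eq_sum => m; rewrite -sum_ord.
have antidiagP (k : 'I_m.+1) : (k + (m - k) = m)%N by rewrite subnKC // -ltnS.
pose diag (k : 'I_m.+1) :=
  exist (fun x : nat * nat => x.1 + x.2 = m)%N (k : nat, m - k)%N (antidiagP k).
rewrite (@sum_reindex _ _ diag (fun x => inord (sval x).1)) // => [k|].
  by rewrite inord_val.
case=> -[i j] /= e; apply: eq_exist.
by rewrite inordK -e ?addKn // ltnS leq_addr.
Qed.

Lemma sum_fibres {I : Type} {J : eqType} (f : I -> J) (a : I -> M) :
  sum I a = sum J (fun j => sum I (fun i => if f i == j then a i else 0)).
Proof.
rewrite (sum_partition f); apply: eq_sum => j.
rewrite (@sum_restrict _ (fun i => f i == j)); last by move=> i /negbTE ->.
rewrite (@sum_reindex _ _ (fun i : {i | f i == j} => exist _ (sval i) (eqP (svalP i)))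
                          (fun i => exist _ (sval i) (introT eqP (svalP i)))).
- by apply: eq_sum => -[i /= ->].
- by case=> i ?; apply: eq_exist.
- by case=> i ?; apply: eq_exist.
Qed.

End CompleteMonoid.

Definition mxsum {M : nmodType} (sum : sum_op M) {m k : nat} : sum_op 'M[M]_(m, k) :=
  fun I F => \matrix_(i, j) sum I (fun x => F x i j).

Lemma mxsumP {M : nmodType} {sum : sum_op M} m k :
  complete_monoid0 sum -> complete_monoid0 (@mxsum M sum m k).
Proof.
move=> sumP; split; first split.
- by move=> I a I0; apply/matrixP => i j; rewrite !mxE (sum_empty sumP).
- by move=> I a i0 a_i0; apply/matrixP => i j; rewrite !mxE (sum_single sumP _ _ a_i0).
- move=> I a i0 i1 ne01 a01; apply/matrixP => i j.
  by rewrite !mxE (sum_doubleton sumP _ _ _ ne01 a01).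
- move=> I J f a; apply/matrixP => i j; rewrite !mxE (sum_partition sumP f).
  by apply: eq_sum => j'; rewrite mxE.
- by move=> I; apply/matrixP => i j; rewrite !mxE (sum_const0 sumP).
Qed.

Section CompleteSemiring.
Context {S : pzSemiRingType} {csum : sum_op S}.
Hypothesis csumP : complete_semiring csum.

Lemma csum_mull I (a : I -> S) s : csum I (fun i => s * a i) = s * csum I a.
Proof. by case: csumP. Qed.

Lemma csum_mulr I (a : I -> S) s : csum I (fun i => a i * s) = csum I a * s.
Proof. by case: csumP. Qed.

Lemma complete_semiring_monoid0 : complete_monoid0 csum.
Proof.
split; first by case: csumP.
move=> I; rewrite -[RHS](mul0r (csum I (fun _ => 0))) -csum_mull.
by apply: eq_sum => i; rewrite mul0r.
Qed.

Lemma msumP n : complete_monoid0 (fun I (F : I -> 'M[S]_n) => msum csum F).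
Proof. exact: mxsumP complete_semiring_monoid0. Qed.

Lemma msum_mull n I (A : 'M[S]_n) (F : I -> 'M[S]_n) :
  msum csum (fun x => A *m F x) = A *m msum csum F.
Proof.
apply/matrixP => i j; rewrite !mxE.
under eq_sum => x do rewrite mxE.
by rewrite (sum_bigr complete_semiring_monoid0); apply: eq_bigr => k _; rewrite mxE csum_mull.
Qed.

Lemma msum_mulr n I (A : 'M[S]_n) (F : I -> 'M[S]_n) :
  msum csum (fun x => F x *m A) = msum csum F *m A.
Proof.
apply/matrixP => i j; rewrite !mxE.
under eq_sum => x do rewrite mxE.
by rewrite (sum_bigr complete_semiring_monoid0); apply: eq_bigr => k _; rewrite mxE csum_mulr.
Qed.

End CompleteSemiring.

Section MatrixAction.
Context {S : pzSemiRingType} {V : lSemiModType S} {n : nat}.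
Implicit Types (A B : 'M[S]_n) (u v : 'cV[V]_n).

Lemma mxact1 u : mxact 1%:M u = u.
Proof.
apply/matrixP => i j; rewrite !mxE (bigD1 i) //= mxE eqxx scale1r big1 ?addr0 ?ord1 //.
by move=> k /negbTE ki; rewrite mxE eq_sym ki scale0r.
Qed.

Lemma mxactM A B u : mxact (A *m B) u = mxact A (mxact B u).
Proof.
apply/matrixP => i j; rewrite !mxE.
under eq_bigr => k _ do rewrite mxE scaler_suml.
rewrite exchange_big; apply: eq_bigr => m _; rewrite mxE scaler_sumr.
by apply: eq_bigr => k _; rewrite scalerA.
Qed.

Lemma mxactDr A u v : mxact A (u + v) = mxact A u + mxact A v.
Proof.
by apply/matrixP => i j; rewrite !mxE -big_split; apply: eq_bigr => k _; rewrite mxE scalerDr.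
Qed.

Lemma mxact0r A : mxact A (0 : 'cV[V]_n) = 0.
Proof. by apply/matrixP => i j; rewrite !mxE big1 // => k _; rewrite mxE scaler0. Qed.

Lemma mxact0l u : mxact 0 u = 0.
Proof. by apply/matrixP => i j; rewrite !mxE big1 // => k _; rewrite mxE scale0r. Qed.

End MatrixAction.

Section CompleteSemimodule.
Context {S : pzSemiRingType} {V : lSemiModType S} {csum : sum_op S} {vsum : sum_op V}.
Hypothesis vsumP : complete_semimodule csum vsum.

Lemma vsumZr I (v : I -> V) s : vsum I (fun i => s *: v i) = s *: vsum I v.
Proof. by case: vsumP. Qed.

Lemma vsumZl I (a : I -> S) v : vsum I (fun i => a i *: v) = csum I a *: v.
Proof. by case: vsumP. Qed.

Lemma complete_semimodule_monoid0 : complete_monoid0 vsum.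
Proof.
split; first by case: vsumP.
move=> I; rewrite -[RHS](scale0r (vsum I (fun _ => 0))) -vsumZr.
by apply: eq_sum => i; rewrite scale0r.
Qed.

Lemma vecsumP n : complete_monoid0 (fun I (F : I -> 'cV[V]_n) => vecsum vsum F).
Proof.
have -> : (fun I (F : I -> 'cV[V]_n) => vecsum vsum F) = mxsum vsum.
  apply: functional_extensionality_dep => I; apply: funext => F.
  by apply/matrixP => i j; rewrite !mxE ord1.
exact: mxsumP complete_semimodule_monoid0.
Qed.

Lemma mxact_msum n I (F : I -> 'M[S]_n) (u : 'cV[V]_n) :
  mxact (msum csum F) u = vecsum vsum (fun x => mxact (F x) u).
Proof.
apply/matrixP => i j; rewrite !mxE.
under [RHS]eq_sum => x do rewrite mxE.
by rewrite (sum_bigr complete_semimodule_monoid0); apply: eq_bigr => k _; rewrite mxE vsumZl.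
Qed.

End CompleteSemimodule.

Lemma cat_injl {T : Type} (s : seq T) : injective (fun w => w ++ s).
Proof.
move=> w1 w2 e; have sz12 : size w1 = size w2.
  by move/(congr1 size): e; rewrite !size_cat => /addIn.
by move/(congr1 (take (size w1))): e; rewrite take_size_cat // sz12 take_size_cat.
Qed.

Lemma eqseq_catl_id {T : eqType} (w s : seq T) : (w ++ s == s) = (w == [::]).
Proof. by apply/eqP/eqP => [e|->//]; apply: (cat_injl s); rewrite e. Qed.

Section PushdownMatrix.
Context {S : pzSemiRingType} {n : nat} {Gamma : finType} {M : blockmx S n Gamma}.
Hypothesis HM : pushdown M.

Lemma pushdown_nil tau : M [::] tau = 0.
Proof. by case: HM => _ /(_ [::] tau) [_ ->] // [p [pi [pi' []]]]. Qed.

Lemma pushdown_cons q rho sigma : M (q :: rho) (sigma ++ rho) = M [:: q] sigma.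
Proof. by case: HM => _ /(_ (q :: rho) (sigma ++ rho)) [/(_ q sigma rho) ->]. Qed.

Lemma pushdown_cons0 q rho tau :
  (forall sigma, tau <> sigma ++ rho) -> M (q :: rho) tau = 0.
Proof.
move=> tau_rho; case: HM => _ /(_ (q :: rho) tau) [_ ->] //.
by case=> p [pi [pi' [[_ <-] e]]]; apply: (tau_rho pi).
Qed.

Lemma pushdown_cat w w' rho : w != [::] -> M (w ++ rho) (w' ++ rho) = M w w'.
Proof.
case: w => [//|q w] _ /=.
have [[sigma ->]|w'_w] := pselect (exists sigma, w' = sigma ++ w).
  by rewrite -catA !pushdown_cons.
have w'_rho sigma : w' ++ rho <> sigma ++ w ++ rho.
  by rewrite catA => /cat_injl e; apply: w'_w; exists sigma.
by rewrite !pushdown_cons0 // => sigma e; apply: w'_w; exists sigma.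
Qed.

Lemma sum_pushdown_cons {X : nmodType} {sum : sum_op X} (sumP : complete_monoid0 sum)
    (G : seq Gamma -> 'M[S]_n -> X) q rho :
  (forall tau, G tau 0 = 0) ->
  sum _ (fun tau => G tau (M (q :: rho) tau)) =
  sum _ (fun sigma => G (sigma ++ rho) (M [:: q] sigma)).
Proof.
move=> G0; rewrite (sum_inj sumP (fun sigma => sigma ++ rho)) => [||tau tau_rho].
- by apply: eq_sum => sigma; rewrite pushdown_cons.
- exact: cat_injl.
- by rewrite pushdown_cons0 // => sigma /esym; apply: tau_rho.
Qed.

End PushdownMatrix.

Section PushdownStar.
Context {S : pzSemiRingType} {csum : sum_op S} {n : nat} {Gamma : finType}.
Context {M : blockmx S n Gamma}.
Hypotheses (csumP : complete_semiring csum) (HM : pushdown M).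
Let msP := msumP csumP n.
Local Notation Mp := (Mpow csum M).
Local Notation Ms := (Mstar csum M).

Lemma MpowSr m a b : Mp m.+1 a b = msum csum (fun s => Mp m a s *m M s b).
Proof. by []. Qed.

Lemma MpowSl m a b : Mp m.+1 a b = msum csum (fun s => M a s *m Mp m s b).
Proof.
elim: m a b => [|m IH] a b.
  rewrite MpowSr (sum_unique msP a) => [|s /eqP]; last first.
    by rewrite eq_sym /= => /negbTE ->; rewrite mul0mx.
  rewrite (sum_unique msP b) => [|s /eqP /negbTE /= ->]; last by rewrite mulmx0.
  by rewrite /= !eqxx mul1mx mulmx1.
transitivity (msum csum (fun t => msum csum (fun s => M a s *m (Mp m s t *m M t b)))).
  rewrite MpowSr; apply: eq_sum => t; rewrite IH -(msum_mulr csumP).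
  by apply: eq_sum => s; rewrite mulmxA.
rewrite (exchange_sum msP); apply: eq_sum => s; by rewrite (msum_mull csumP).
Qed.

Lemma Mpow_nil m b : Mp m.+1 [::] b = 0.
Proof.
rewrite MpowSl -[RHS](sum_const0 msP (seq Gamma)).
by apply: eq_sum => s; rewrite (pushdown_nil HM) mul0mx.
Qed.

Lemma Mpow_cat m rho pi :
  Mp m (rho ++ pi) [::] = \sum_(a < m.+1) Mp a rho [::] *m Mp (m - a) pi [::].
Proof.
elim: m rho => [|m IH] [|q rho].
- by rewrite big_ord1 /= mul1mx.
- by rewrite big_ord1 /= mul0mx.
- rewrite big_ord_recl big1 => [|a _]; last by rewrite Mpow_nil mul0mx.
  by rewrite (_ : Mp 0 [::] [::] = 1%:M) // mul1mx addr0.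
rewrite cat_cons MpowSl (sum_pushdown_cons HM msP (fun tau A => A *m Mp m tau [::]));
  last by move=> tau; rewrite mul0mx.
under eq_sum => sigma do rewrite catA IH mulmx_sumr.
rewrite (sum_bigr msP) [RHS]big_ord_recl (_ : Mp 0 (q :: rho) [::] = 0) // mul0mx add0r.
apply: eq_bigr => a _; rewrite lift0 subSS MpowSl.
rewrite (sum_pushdown_cons HM msP (fun tau A => A *m Mp a tau [::]));
  last by move=> tau; rewrite mul0mx.
by rewrite -(msum_mulr csumP); apply: eq_sum => sigma; rewrite mulmxA.
Qed.

Lemma Mstar_cat rho pi : Ms (rho ++ pi) [::] = Ms rho [::] *m Ms pi [::].
Proof.
rewrite /Mstar.
under eq_sum => m do rewrite Mpow_cat.
rewrite (sum_nat_cauchy msP (fun a b => Mp a rho [::] *m Mp b pi [::])).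
by rewrite -(msum_mulr csumP); apply: eq_sum => a; rewrite -(msum_mull csumP).
Qed.

Lemma Mstar_nil : Ms [::] [::] = 1%:M.
Proof.
rewrite /Mstar (sum_natS msP) (_ : Mp 0 [::] [::] = 1%:M) //.
under eq_sum => m do rewrite Mpow_nil.
by rewrite (sum_const0 msP) addr0.
Qed.

Lemma xprod_Mstar w : xprod (fun q => Ms [:: q] [::]) w = Ms w [::].
Proof.
elim: w => [|q w IH]; first by rewrite Mstar_nil.
by rewrite /= -/(xprod _ w) IH -(Mstar_cat [:: q] w).
Qed.

Lemma Mstar_solves_system p :
  Ms [:: p] [::] = msum csum (fun pi => M [:: p] pi *m xprod (fun q => Ms [:: q] [::]) pi).
Proof.
rewrite {1}/Mstar (sum_natS msP) (_ : Mp 0 [:: p] [::] = 0) // add0r.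
under eq_sum => m do rewrite MpowSl.
rewrite (exchange_sum msP); apply: eq_sum => pi.
by rewrite (msum_mull csumP) xprod_Mstar.
Qed.

End PushdownStar.

Section PushdownOmega.
Context {S : pzSemiRingType} {V : lSemiModType S}.
Context {csum : sum_op S} {vsum : sum_op V} {iprod : (nat -> S) -> V}.
Variables (n : nat) (Gamma : finType) (M : blockmx S n Gamma) (l : nat).
Hypotheses (Hpair : complete_pair csum vsum iprod) (HM : pushdown M).

Let csumP : complete_semiring csum. Proof. by case: Hpair. Qed.
Let vsumP : complete_semimodule csum vsum. Proof. by case: Hpair. Qed.
Let vmonoidP := complete_semimodule_monoid0 vsumP.
Let vecP := vecsumP vsumP n.
Let msP := msumP csumP n.
Local Notation Mp := (Mpow csum M).
Local Notation Ms := (Mstar csum M).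
Local Notation Omega := (Momega vsum iprod l M).

Lemma iprod_cons f : iprod f = f 0%N *: iprod (fun t => f t.+1).
Proof. by case: Hpair. Qed.

Lemma iprod_eq0 t f : f t = 0 -> iprod f = 0.
Proof.
elim: t f => [|t IH] f ft; rewrite iprod_cons; first by rewrite ft scale0r.
by rewrite (IH (fun t => f t.+1)) // scaler0.
Qed.

Local Notation run := (nat -> seq Gamma * 'I_n)%type.
Local Notation runs := {c : run | Pl l c}.
Definition run_stack s (c : run) t := if t is t'.+1 then (c t').1 else s.
Definition run_index i (c : run) t := if t is t'.+1 then (c t').2 else i.
Definition weight s i (c : run) := iprod (fun t =>
  M (run_stack s c t) (run_stack s c t.+1) (run_index i c t) (run_index i c t.+1)).
Arguments weight : simpl never.

Lemma MomegaE s i : Omega s i 0 = vsum runs (fun c => weight s i (sval c)).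
Proof. by rewrite mxE. Qed.

Definition run_cons h (c : run) : run := fun t => if t is t'.+1 then c t' else h.

Lemma Pl_run_cons h c : Pl l (run_cons h c) <-> Pl l c.
Proof.
split=> c_l N.
  by have [[|t] [Nt t_l]] := c_l N.+1; last by exists t.
by have [t [Nt t_l]] := c_l N; exists t.+1; split; first exact: leqW.
Qed.

Lemma weight_cons s i h c : weight s i (run_cons h c) = M s h.1 i h.2 *: weight h.1 h.2 c.
Proof. by rewrite /weight iprod_cons; congr (_ *: iprod _); apply: funext => -[]. Qed.

Lemma sum_runs_cons (F : run -> V) :
  vsum runs (fun c => F (sval c)) =
  vsum (seq Gamma * 'I_n)%type (fun h => vsum runs (fun c => F (run_cons h (sval c)))).
Proof.
have behead_l (c : runs) : Pl l (fun t => sval c t.+1).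
  apply: (proj1 (Pl_run_cons (sval c 0%N) _)).
  rewrite (_ : run_cons _ _ = sval c); first exact: svalP.
  by apply: funext => -[].
rewrite -(sum_prod vmonoidP (fun x => F (run_cons x.1 (sval x.2)))).
apply: (@sum_reindex _ _ vmonoidP _ _
  (fun x => exist _ (run_cons x.1 (sval x.2)) (proj2 (Pl_run_cons _ _) (svalP x.2)))
  (fun c => (sval c 0%N, exist _ _ (behead_l c)))).
- by case=> h [c c_l]; congr pair; apply: eq_exist.
- by case=> c c_l; apply: eq_exist; apply: funext => -[].
Qed.

Definition Momega_if (P : seq Gamma -> run -> bool) s : 'cV[V]_n :=
  \col_i vsum runs (fun c => if P s (sval c) then weight s i (sval c) else 0).

Lemma Momega_if_cons (P Q : seq Gamma -> run -> bool) (b : pred (seq Gamma)) s :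
  (forall s h c, P s (run_cons h c) = b s && Q h.1 c) ->
  Momega_if P s =
    if b s then vecsum vsum (fun tau => mxact (M s tau) (Momega_if Q tau)) else 0.
Proof.
move=> PQ; apply/matrixP => i j; rewrite ord1 !mxE (sum_runs_cons (fun c =>
  if P s c then weight s i c else 0)).
under eq_sum => h do under eq_sum => c do rewrite PQ weight_cons.
case: (b s); last first.
  rewrite mxE -[RHS](sum_const0 vmonoidP (seq Gamma * 'I_n)).
  by apply: eq_sum => h; exact: (sum_const0 vmonoidP).
rewrite (sum_prod vmonoidP) mxE; apply: eq_sum => tau; rewrite mxE -(sum_ord vmonoidP).
apply: eq_sum => k; rewrite mxE -(vsumZr vsumP); apply: eq_sum => c.
by case: (Q _ _); rewrite ?scaler0.
Qed.

Lemma Momega_first s : Omega s = vecsum vsum (fun tau => mxact (M s tau) (Omega tau)).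
Proof.
by rewrite -[Omega s]/(Momega_if (fun _ _ => true) s) (Momega_if_cons _ (fun _ _ => true) predT).
Qed.

Lemma Momega_nil : Omega [::] = 0.
Proof.
rewrite Momega_first -[RHS](sum_const0 vecP (seq Gamma)).
by apply: eq_sum => tau; rewrite (pushdown_nil HM) mxact0l.
Qed.

Definition hits_first pp a s c :=
  (run_stack s c a == pp) && all (fun t => run_stack s c t != pp) (iota 0 a).

Lemma hits_first0 pp s c : hits_first pp 0 s c = (s == pp).
Proof. by rewrite /hits_first andbT. Qed.

Lemma hits_first_cons pp a s h c :
  hits_first pp a.+1 s (run_cons h c) = (s != pp) && hits_first pp a h.1 c.
Proof.
rewrite /hits_first /= (iotaDl 1 0) all_map andbCA.
by congr (_ && (_ && _)); [case: a | apply: eq_all => -[]].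
Qed.

Lemma Momega_hits_first pp a rho :
  Momega_if (hits_first pp a) (rho ++ pp) = mxact (Mp a rho [::]) (Omega pp).
Proof.
elim: a rho => [|a IH] [|q rho].
- rewrite (_ : Mp 0 [::] [::] = 1%:M) // mxact1.
  by apply/matrixP => i j; rewrite !mxE; apply: eq_sum => c; rewrite hits_first0 eqxx.
- rewrite (_ : Mp 0 (q :: rho) [::] = 0) // mxact0l.
  apply/matrixP => i j; rewrite !mxE -[RHS](sum_const0 vmonoidP runs).
  by apply: eq_sum => c; rewrite hits_first0 eqseq_catl_id.
- rewrite (Momega_if_cons _ (hits_first pp a) (fun s => s != pp)) => [|s h c].
    by rewrite eqxx (Mpow_nil csumP HM) mxact0l.
  exact: hits_first_cons.
rewrite (Momega_if_cons _ (hits_first pp a) (fun s => s != pp)) => [|s h c]; last first.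
  exact: hits_first_cons.
rewrite ifT ?eqseq_catl_id // cat_cons (sum_pushdown_cons HM vecP
  (fun tau A => mxact A (Momega_if (hits_first pp a) tau))) => [|tau]; last exact: mxact0l.
under eq_sum => sigma do rewrite catA IH -mxactM.
rewrite -(mxact_msum vsumP) (MpowSl csumP).
by rewrite (sum_pushdown_cons HM msP (fun tau A => A *m Mp a tau [::])) // => tau; rewrite mul0mx.
Qed.

Definition first_hit pp s c : option nat :=
  if pselect (exists t, run_stack s c t == pp) is left e then Some (ex_minn e) else None.

Lemma first_hit_some pp a s c : (first_hit pp s c == Some a) = hits_first pp a s c.
Proof.
rewrite /first_hit /hits_first; case: pselect => [e|ne]; last first.
  by apply/esym/negbTE; apply: contra_notN ne => /andP [c_pp _]; exists a.
case: ex_minnP => m c_pp m_min; apply/eqP/andP => [[<-]|[a_pp /allP a_min]].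
  split=> //; apply/allP => t; rewrite mem_iota add0n => /andP [_ tm].
  by apply: contraTneq tm => /eqP /m_min; rewrite leqNgt.
congr Some; apply/eqP; rewrite eqn_leq m_min // leqNgt; apply/negP => ma.
by move: (a_min m); rewrite mem_iota add0n ma c_pp => /(_ isT).
Qed.

Lemma first_hit_noneP pp s c :
  reflect (forall t, run_stack s c t != pp) (first_hit pp s c == None).
Proof.
rewrite /first_hit; case: pselect => [e|ne]; constructor.
  by case: e => t c_pp /(_ t); rewrite c_pp.
by move=> t; apply/negP => c_pp; apply: ne; exists t.
Qed.

Lemma Momega_first_hit pp s :
  Omega s = Momega_if (fun s c => first_hit pp s c == None) s +
            vecsum vsum (fun a => Momega_if (hits_first pp a) s).
Proof.
apply/matrixP => i j; rewrite ord1 !mxE.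
rewrite (sum_fibres vmonoidP (fun c => first_hit pp s (sval c))) (sum_option vmonoidP).
congr (_ + _); apply: eq_sum => a; rewrite !mxE; apply: eq_sum => c.
by rewrite first_hit_some.
Qed.

Definition run_cat pp (c : run) : run := fun t => ((c t).1 ++ pp, (c t).2).

Lemma run_stack_cat pp rho c t :
  run_stack (rho ++ pp) (run_cat pp c) t = run_stack rho c t ++ pp.
Proof. by case: t. Qed.

Lemma run_cat_suffix {pp s c} :
  (forall t, suffix pp (run_stack s c t)) -> exists c', c = run_cat pp c'.
Proof.
move=> c_pp; exists (fun t => (take (size (c t).1 - size pp) (c t).1, (c t).2)).
apply: funext => t; have /suffixP [w /= e] := c_pp t.+1.
by rewrite /run_cat /= e size_cat addnK take_size_cat // -e; case: (c t).
Qed.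

Lemma weight_cat pp rho i c :
  (forall t, run_stack rho c t != [::]) -> weight (rho ++ pp) i (run_cat pp c) = weight rho i c.
Proof.
move=> c_nil; rewrite /weight; congr iprod; apply: funext => t.
by rewrite !run_stack_cat (pushdown_cat HM) //; case: t.
Qed.

Lemma weight_nil rho i c t : run_stack rho c t = [::] -> weight rho i c = 0.
Proof. by move=> c_nil; apply: (iprod_eq0 t); rewrite c_nil (pushdown_nil HM) mxE. Qed.

(* A step of nonzero weight from [q :: w ++ pp] keeps the suffix [w ++ pp], so only a
   step from [pp] itself can leave the suffix [pp]. *)
Lemma weight_leave_suffix {pp s i c} t : suffix pp s -> (forall t, run_stack s c t != pp) ->
  ~~ suffix pp (run_stack s c t) -> weight s i c = 0.
Proof.
move=> s_pp c_pp t_pp; have ex_leave : exists t, ~~ suffix pp (run_stack s c t) by exists t.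
case: (ex_minnP ex_leave) => -[|u]; first by rewrite s_pp.
move=> u_pp u_min; have : suffix pp (run_stack s c u).
  by apply/negPn/negP => /u_min; rewrite ltnn.
case/suffixP => -[|q w] u_w; first by move: (c_pp u); rewrite u_w eqxx.
apply: (iprod_eq0 u); rewrite u_w cat_cons (pushdown_cons0 HM) ?mxE // => sigma e.
by move: u_pp; rewrite e catA suffix_suffix.
Qed.

(* A run from [rho ++ pp] that never reaches [pp] either keeps [pp] at the bottom of its
   stack, and is then a run from [rho] with [pp] appended, or has weight 0. *)
Lemma Momega_never_hits pp rho :
  Momega_if (fun s c => first_hit pp s c == None) (rho ++ pp) = Omega rho.
Proof.
apply/matrixP => i j; rewrite ord1 MomegaE mxE.
pose cat_pp (c : runs) : runs := exist _ (run_cat pp (sval c)) (svalP c).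
rewrite (sum_inj vmonoidP cat_pp) => [||[c c_l] c_cat].
- apply: eq_sum => -[c c_l] /=; case: first_hit_noneP => [never|hit].
    by rewrite weight_cat // => t; move: (never t); rewrite run_stack_cat eqseq_catl_id.
  have [t /negP] := (existsNP _).2 hit.
  by rewrite negbK run_stack_cat eqseq_catl_id => /eqP /weight_nil ->.
- move=> [c1 ?] [c2 ?] /(congr1 sval) /= e; apply: eq_exist; apply: funext => t.
  move/(congr1 (fun c => c t)): e; rewrite /run_cat.
  by case: (c1 t) (c2 t) => [w1 k1] [w2 k2] [/cat_injl -> ->].
rewrite /=; case: first_hit_noneP => // never.
have [c_pp|] := pselect (forall t, suffix pp (run_stack (rho ++ pp) c t)); last first.
  by case/existsNP => t /negP; apply: weight_leave_suffix (suffix_suffix _ _) never.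
have [c' c'E] := run_cat_suffix c_pp.
have c'_l : Pl l c' by move: (c_l); rewrite c'E.
by case: (c_cat (exist _ c' c'_l)); apply: eq_exist.
Qed.

Lemma Momega_cat rho pp : Omega (rho ++ pp) = Omega rho + mxact (Ms rho [::]) (Omega pp).
Proof.
rewrite [LHS](Momega_first_hit pp) Momega_never_hits; congr (_ + _).
under eq_sum => a do rewrite Momega_hits_first.
by rewrite -(mxact_msum vsumP).
Qed.

Lemma Momega_decomp p tau : Omega tau =
  \sum_(j < size tau) mxact (xprod (fun q => Ms [:: q] [::]) (take j tau)) (Omega [:: nth p tau j]).
Proof.
elim: tau => [|q tau IH]; first by rewrite Momega_nil big_ord0.
rewrite -cat1s Momega_cat IH big_ord_recl take0 mxact1.
rewrite (big_morph _ (mxactDr _) (mxact0r _)); congr (_ + _).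
by apply: eq_bigr => j _; rewrite -mxactM.
Qed.

Lemma Momega_solves_system p :
  Omega [:: p] = vecsum vsum (fun pi : {w : seq Gamma | (0 < size w)%N} =>
    mxact (M [:: p] (sval pi)) (\sum_(j < size (sval pi))
      mxact (xprod (fun q => Ms [:: q] [::]) (take j (sval pi))) (Omega [:: nth p (sval pi) j]))).
Proof.
rewrite Momega_first (sum_restrict vecP (fun tau : seq Gamma => 0 < size tau)%N).
  by apply: eq_sum => -[tau tau_pos]; rewrite -(Momega_decomp p).
by case=> // _; rewrite Momega_nil mxact0r.
Qed.

End PushdownOmega.

Theorem corollary9
  (S : pzSemiRingType) (V : lSemiModType S)
  (csum : sum_op S) (vsum : sum_op V) (iprod : (nat -> S) -> V)
  (Hpair : complete_pair csum vsum iprod)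
  (S' : S -> Prop) (HS'0 : S' 0) (HS'1 : S' 1)
  (n : nat) (Hn : (0 < n)%N)
  (Gamma : finType) (M : blockmx S n Gamma)
  (HMS' : forall pi1 pi2 i j, S' (M pi1 pi2 i j))
  (HM : pushdown M)
  (l : nat) (Hl : (l <= n)%N) :
  let x := fun q : Gamma => Mstar csum M [:: q] [::] in
  let z := fun q : Gamma => Momega vsum iprod l M [:: q] in
  forall p : Gamma,
    x p = msum csum (fun pi : seq Gamma => M [:: p] pi *m xprod x pi) /\
    z p = vecsum vsum
            (fun (pi : {w : seq Gamma | (0 < size w)%N}) =>
               mxact (M [:: p] (sval pi))
                 (\sum_(j < size (sval pi))
                     mxact (xprod x (take j (sval pi))) (z (nth p (sval pi) j)))).
Proof.
have [csumP _ _ _ _] := Hpair.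
move=> x z p; split; first exact: Mstar_solves_system.
exact: Momega_solves_system.
Qed.
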